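(* In Setup A, let $f_1<f_2<\dots<f_s$ be the distinct values of $\{f(\tau'^* ):\tau'\in\mathcal{O}\}$ and for each $1\le u\le s$ choose $\tau_u\in\mathcal{O}$ with $f(\tau_u^* )=f_u$. For $\tau\in\mathcal{O}$ and $0\le i\le l-1$ let $H_{\tau,i}:M_{p^i\tau}\to M_{p^{i+1}\tau}$ be $F$ if $f(p^i\tau^* )\ge f(\tau^* )$ and $F+V'$ if $f(p^i\tau^* )<f(\tau^* )$. Fix $1\le u\le s$ and assume that for every $1\le j\le u$, $$\dim\big(\pi_{\tau_j}\circ H_{\tau_j,l-1}\circ\cdots\circ H_{\tau_j,0}(M_{\tau_j})\big)=f_j.$$ Then $w_\tau$ is maximal for every $\tau\in\mathcal{O}$ with $f(\tau^* )\le f_u$.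
   Context: Setup A. Let $k_0=\overline{\mathbb{F}}_p$ with Frobenius $\sigma$. Let $\mathcal{O}$ be a finite set of size $l$ with a cyclic permutation $\tau'\mapsto p\tau'$ (so $\mathcal{O}=\{\tau,p\tau,\dots,p^{l-1}\tau\}$ and $p^l\tau=\tau$). Fix an integer $g\ge1$ and, for each $\tau'\in\mathcal{O}$, non-negative integers $f(\tau')$, $f(\tau'^* )$ with $f(\tau')+f(\tau'^* )=g$ (the notation $f(p^i\tau^* )$ means $f((p^i\tau)^* )$). Let $M=\bigoplus_{\tau'\in\mathcal{O}}M_{\tau'}$ where $M_{\tau'}$ has $k_0$-basis $e_{\tau',1},\dots,e_{\tau',g}$; write $M_{\tau',k}=\mathrm{Span}(e_{\tau',1},\dots,e_{\tau',k})$. For each $\tau'$ fix increasing sequences $j_{\tau',1}<\dots<j_{\tau',f(\tau')}$ and $i_{\tau',1}<\dots<i_{\tau',f(\tau'^* )}$ partitioning $\{1,\dots,g\}$, and let $w_{\tau'}\in\mathrm{Sym}_g$ be given by $w_{\tau'}(j_{\tau',k})=k$, $w_{\tau'}(i_{\tau',k})=f(\tau')+k$. Let $F:M\to M$ be the $\sigma$-semilinear map with $F(e_{\tau',j})=e_{p\tau',\,w_{\tau'}(j)-f(\tau')}$ if $w_{\tau'}(j)>f(\tau')$ and $F(e_{\tau',j})=0$ otherwise. Let $V':M\to M$ be the semilinear map with $V'(e_{\tau',j})=e_{p\tau',\,f(\tau'^* )+w_{\tau'}(j)}$ if $w_{\tau'}(j)\le f(\tau')$ and $V'(e_{\tau',j})=0$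 otherwise. Let $Q_{\tau'}=\mathrm{Span}(e_{\tau',i_{\tau',k}})$, $Q^\vee_{\tau'^*}=\mathrm{Span}(e_{\tau',j_{\tau',k}})$, and $\pi_{\tau'}:M_{\tau'}\to Q_{\tau'}$ the projection with kernel $Q^\vee_{\tau'^*}$. We say $w_{\tau'}$ is maximal if $i_{\tau',k}=k$ for all $1\le k\le f(\tau'^* )$, i.e. $w_{\tau'}(k)=f(\tau')+k$ for $k\le f(\tau'^* )$ and $w_{\tau'}(k)=k-f(\tau'^* )$ for $k>f(\tau'^* )$ (equivalently $\ker F\cap M_{\tau',f(\tau'^* )}=0$; this is the permutation of maximal length). *)

From HB Require Import structures.
From mathcomp Require Import all_boot all_order all_algebra.
Set Implicit Arguments. Unset Strict Implicit. Unset Printing Implicit Defensive.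
Import Order.TTheory GRing.Theory Num.Theory.
Local Open Scope ring_scope.

(* The orbit O = {tau, p tau, ..., p^(l-1) tau} is modelled as 'I_l, with the
   cyclic permutation tau' |-> p tau' being ordS (i |-> i+1 mod l).
   Basis indices 1..g are modelled 0-based as 'I_g.
   For each tau' : 'I_l, js tau' = [j_1 < ... < j_f(tau')] and
   is_ tau' = [i_1 < ... < i_f(tau'^* )] (both 0-based).                     *)

Definition pmul {l : nat} (t : 'I_l) : 'I_l := ordS t.
Definition ppow {l : nat} (i : nat) (t : 'I_l) : 'I_l := iter i (@pmul l) t.

Definition fO {l g : nat} (js : 'I_l -> seq 'I_g) (t : 'I_l) : nat := size (js t).
Definition fOstar {l g : nat} (is_ : 'I_l -> seq 'I_g) (t : 'I_l) : nat := size (is_ t).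

(* w_tau' (0-based): w(j_k) = k, w(i_k) = f(tau') + k *)
Definition wperm {l g : nat} (js is_ : 'I_l -> seq 'I_g) (t : 'I_l) (j : 'I_g) : nat :=
  index j (js t ++ is_ t).

Definition ebasis {K : fieldType} {g : nat} (k : 'I_g) : 'rV[K]_g := delta_mx 0 k.

Definition ebasis_nat {K : fieldType} {g : nat} (n : nat) : 'rV[K]_g :=
  if insub n is Some k then ebasis k else 0.

Definition Fimg {K : fieldType} {l g : nat} (js is_ : 'I_l -> seq 'I_g)
    (t : 'I_l) (j : 'I_g) : 'rV[K]_g :=
  if (fO js t <= wperm js is_ t j)%N then ebasis_nat ((wperm js is_ t j - fO js t)%N) else 0.

Definition Vimg {K : fieldType} {l g : nat} (js is_ : 'I_l -> seq 'I_g)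
    (t : 'I_l) (j : 'I_g) : 'rV[K]_g :=
  if (wperm js is_ t j < fO js t)%N then ebasis_nat (fOstar is_ t + wperm js is_ t j)%N else 0.

(* sigma-semilinear extension (sigma = Frobenius x |-> x^p) of a map on basis vectors *)
Definition semilin {K : fieldType} {g : nat} (p : nat) (img : 'I_g -> 'rV[K]_g)
    (v : 'rV[K]_g) : 'rV[K]_g :=
  \sum_(j < g) ((v 0 j) ^+ p) *: img j.

Definition Fmap {K : fieldType} {l g : nat} (p : nat) (js is_ : 'I_l -> seq 'I_g)
    (t : 'I_l) : 'rV[K]_g -> 'rV[K]_g := semilin p (Fimg js is_ t).
Definition Vmap {K : fieldType} {l g : nat} (p : nat) (js is_ : 'I_l -> seq 'I_g)
    (t : 'I_l) : 'rV[K]_g -> 'rV[K]_g := semilin p (Vimg js is_ t).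

Definition Hmap {K : fieldType} {l g : nat} (p : nat) (js is_ : 'I_l -> seq 'I_g)
    (t : 'I_l) (i : nat) (v : 'rV[K]_g) : 'rV[K]_g :=
  let ti := ppow i t in
  if (fOstar is_ t <= fOstar is_ ti)%N then Fmap p js is_ ti v
  else Fmap p js is_ ti v + Vmap p js is_ ti v.

Fixpoint Hcomp {K : fieldType} {l g : nat} (p : nat) (js is_ : 'I_l -> seq 'I_g)
    (t : 'I_l) (m : nat) (v : 'rV[K]_g) : 'rV[K]_g :=
  match m with
  | 0 => v
  | m'.+1 => Hmap p js is_ t m' (Hcomp p js is_ t m' v)
  end.

(* pi_tau' : M_tau' -> Q_tau' with kernel Q^vee_{tau'^*} *)
Definition piproj {K : fieldType} {l g : nat} (is_ : 'I_l -> seq 'I_g)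
    (t : 'I_l) (v : 'rV[K]_g) : 'rV[K]_g :=
  \row_k (if k \in is_ t then v 0 k else 0).

Definition wmaximal {l g : nat} (is_ : 'I_l -> seq 'I_g) (t : 'I_l) : Prop :=
  [seq val x | x <- is_ t] = iota 0 (fOstar is_ t).

Definition has_dim {K : fieldType} {g : nat} (S : 'rV[K]_g -> Prop) (d : nat) : Prop :=
  exists U : 'M[K]_g, (forall v, (v <= U)%MS <-> S v) /\ \rank U = d.

(* The proof is a strong induction on a = f(tau^* ).  Let tau_a be the chosen
   representative with f(tau_a^* ) = a and assume every tau' with
   f(tau'^* ) < a is maximal.  Everything is controlled by supports in the
   standard basis ([supported (gtn k) v] means v is in Span(e_1..e_k)):
   - F maps M_tau' into Span(e_1..e_{f(tau'^* )}) and preserves every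
     Span(e_1..e_k); when w_tau' is maximal, so does F + V'.  Hence the first
     step of the chain H_{tau_a} lands in Span(e_1..e_a) and, by induction,
     every later step keeps it there.
   - If some tau with f(tau^* ) = a were not maximal, then either tau = tau_a
     and pi_{tau_a} keeps fewer than a of the coordinates below a, or
     tau = p^i tau_a with 0 < i < l and the step H_{tau_a,i} = F pushes the
     image into Span(e_1..e_{a-1}).  Either way the image has dimension < a. *)

From HB Require Import structures.
From mathcomp Require Import all_boot all_order all_algebra.
From mathcomp Require Import zify.
Set Implicit Arguments. Unset Strict Implicit. Unset Printing Implicit Defensive.
Import Order.TTheory GRing.Theory Num.Theory.

Lemma index_lower_bound (s : seq nat) (a x : nat) :
  sorted ltn s -> all (leq a) s -> x \in s -> a + index x s <= x.
Proof.
elim: s a => // y s IHs a ys_sorted /= /andP[le_ay _].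
rewrite inE; have [-> _ | _ xs] := eqVneq x y; first by rewrite addn0.
have s_gt_y : all (leq y.+1) s := order_path_min ltn_trans ys_sorted.
have := IHs y.+1 (path_sorted ys_sorted) s_gt_y xs; lia.
Qed.

Lemma sorted_index_lt (s : seq nat) (x y : nat) :
  sorted ltn s -> x \in s -> y \in s -> x < y -> index x s < index y s.
Proof.
move=> s_sorted xs ys lt_xy; rewrite ltnNge; apply/negP => le_yx.
have s_leq : sorted leq s := sub_sorted ltnW s_sorted.
by move: (sorted_leq_index leq_trans leqnn s_leq _ _ ys xs le_yx); rewrite leqNgt lt_xy.
Qed.

Lemma sorted_bounded_iota (s : seq nat) :
  sorted ltn s -> all (gtn (size s)) s -> s = iota 0 (size s).
Proof.
move=> s_sorted /allP s_bounded.
apply: (irr_sorted_eq ltn_trans ltnn s_sorted (iota_ltn_sorted 0 _)).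
apply: (uniq_min_size (sorted_uniq ltn_trans ltnn s_sorted) _ _).2.
- by move=> x /s_bounded; rewrite mem_iota.
- by rewrite size_iota.
Qed.

Lemma ppow_val (l : nat) (i : nat) (t : 'I_l) : val (ppow i t) = (t + i) %% l.
Proof.
elim: i => [|i IHi]; first by rewrite addn0 modn_small.
by rewrite /ppow iterS -/(ppow i t) /pmul /= IHi -addn1 modnDml -addnA addn1 addnS.
Qed.

Lemma orbit_ppow (l : nat) (tau t : 'I_l) : exists2 i, i < l & ppow i tau = t.
Proof.
have l_gt0 : 0 < l by have := ltn_ord t; lia.
exists ((t + (l - tau)) %% l); first by rewrite ltn_mod.
apply: val_inj; rewrite ppow_val modnDmr.
have -> : tau + (t + (l - tau)) = t + l by have := ltn_ord tau; lia.
by rewrite modnDr modn_small.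
Qed.

Local Open Scope ring_scope.

Section Support.
Variables (K : fieldType) (g : nat).

Definition supported (P : pred nat) (v : 'rV[K]_g) : Prop :=
  forall j : 'I_g, ~~ P j -> v 0 j = 0.

Lemma supported0 (P : pred nat) : supported P 0.
Proof. by move=> j _; rewrite mxE. Qed.

Lemma supportedD (P : pred nat) (u v : 'rV[K]_g) :
  supported P u -> supported P v -> supported P (u + v).
Proof. by move=> u_supp v_supp j Pj; rewrite mxE u_supp // v_supp // addr0. Qed.

Lemma supported_ebasis (P : pred nat) (n : nat) :
  P n -> supported P (ebasis_nat n).
Proof.
move=> Pn j NPj; rewrite /ebasis_nat; case: insubP => [k _ kn|_]; last by rewrite mxE.
rewrite /ebasis mxE eqxx /=; case: eqP => // kj.
by move: NPj; rewrite kj (_ : nat_of_ord k = n) // Pn.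
Qed.

Lemma supported_mono (P Q : pred nat) (v : 'rV[K]_g) :
  supported P v -> subpred P Q -> supported Q v.
Proof. by move=> v_supp PQ j Qj; apply: v_supp; apply: contra Qj; apply: PQ. Qed.

Lemma supported_semilin (p : nat) (img : 'I_g -> 'rV[K]_g) (P Q : pred nat)
    (v : 'rV[K]_g) :
  (0 < p)%N -> supported P v -> (forall j : 'I_g, P j -> supported Q (img j)) ->
  supported Q (semilin p img v).
Proof.
move=> p_gt0 v_supp img_supp k Qk; rewrite /semilin summxE big1 // => j _.
rewrite mxE; case: (boolP (P j)) => Pj; first by rewrite img_supp ?mulr0.
by rewrite v_supp // expr0n eqn0Ngt p_gt0 mul0r.
Qed.

Lemma supported_piproj (l : nat) (is_ : 'I_l -> seq 'I_g) (t : 'I_l)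
    (P : pred nat) (v : 'rV[K]_g) :
  supported P v -> supported P (piproj is_ t v).
Proof. by move=> v_supp j Pj; rewrite mxE; case: ifP => // _; apply: v_supp. Qed.

(* A subspace of vectors supported on the coordinates listed in s has dimension
   at most size s: it lies in the span of the e_j, j in s. *)
Lemma has_dim_supported (S : 'rV[K]_g -> Prop) (d : nat) (s : seq nat) :
  has_dim S d -> (forall v, S v -> supported (fun n => n \in s) v) ->
  (d <= size s)%N.
Proof.
case=> U [U_span <-] S_supp.
pose W : 'M[K]_(size s, g) := \matrix_(i < size s) ebasis_nat (nth 0%N s i).
have W_span v : supported (fun n => n \in s) v -> (v <= W)%MS.
  move=> v_supp; rewrite [v]row_sum_delta; apply: summx_sub => k _.
  have [ks | kNs] := boolP (val k \in s); last by rewrite v_supp // scale0r sub0mx.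
  have ik : (index (val k) s < size s)%N by rewrite index_mem.
  apply: scalemx_sub; have -> : delta_mx 0 k = row (Ordinal ik) W.
    by rewrite rowK nth_index // /ebasis_nat valK.
  exact: row_sub.
have U_le_W : (U <= W)%MS.
  by apply/row_subP => i; apply/W_span/S_supp/U_span; exact: row_sub.
exact: leq_trans (mxrankS U_le_W) (rank_leq_row W).
Qed.

End Support.

Section SetupA.
Variables (K : fieldType) (l g p : nat) (js is_ : 'I_l -> seq 'I_g).
Hypothesis p_gt0 : (0 < p)%N.
Hypothesis js_sorted : forall t, sorted (fun a b : 'I_g => (a < b)%N) (js t).
Hypothesis is_sorted : forall t, sorted (fun a b : 'I_g => (a < b)%N) (is_ t).
Hypothesis js_is_partition : forall t, perm_eq (js t ++ is_ t) (enum 'I_g).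

Lemma js_or_is (t : 'I_l) (j : 'I_g) : (j \in js t) || (j \in is_ t).
Proof. by rewrite -mem_cat (perm_mem (js_is_partition t)) mem_enum. Qed.

Lemma is_notin_js (t : 'I_l) (j : 'I_g) : j \in is_ t -> j \notin js t.
Proof.
move=> j_is; have := perm_uniq (js_is_partition t); rewrite enum_uniq cat_uniq.
by case/and3P=> _ /hasPn/(_ j j_is).
Qed.

Lemma nonmaximal_witness (t : 'I_l) :
  ~ wmaximal is_ t -> exists2 j : 'I_g, j \in is_ t & (fOstar is_ t <= j)%N.
Proof.
move=> nonmax; apply/(@hasP _ (fun j : 'I_g => fOstar is_ t <= j)%N).
rewrite -[has _ _]negbK -all_predC; apply/negP => bounded; apply: nonmax.
rewrite /wmaximal /fOstar -(size_map val); apply: sorted_bounded_iota.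
  by rewrite sorted_map.
by rewrite size_map all_map; apply: sub_all bounded => j /=; rewrite ltnNge.
Qed.

Lemma maximal_js_ge (t : 'I_l) (j : 'I_g) :
  wmaximal is_ t -> j \in js t -> (fOstar is_ t <= j)%N.
Proof.
move=> max_t j_js; rewrite leqNgt; apply/negP => j_lt.
have : val j \in [seq val x | x <- is_ t] by rewrite max_t mem_iota.
by rewrite (mem_map val_inj) => /is_notin_js; rewrite j_js.
Qed.

Lemma index_is_le (t : 'I_l) (j : 'I_g) : j \in is_ t -> (index j (is_ t) <= j)%N.
Proof.
move=> j_is; rewrite -(index_map val_inj) -[X in (X <= _)%N]add0n.
by apply: index_lower_bound; rewrite ?sorted_map ?(mem_map val_inj) //; apply/allP.
Qed.

(* For maximal w_t the j_{t,k} start at f(t^* ), so j_{t,k} >= f(t^* ) + k. *)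
Lemma index_js_bound (t : 'I_l) (j : 'I_g) :
  wmaximal is_ t -> j \in js t -> (fOstar is_ t + index j (js t) <= j)%N.
Proof.
move=> max_t j_js; rewrite -(index_map val_inj).
apply: index_lower_bound; rewrite ?sorted_map ?(mem_map val_inj) //.
by rewrite all_map; apply/allP => x /(maximal_js_ge max_t).
Qed.

Lemma index_is_nonmax (t : 'I_l) (j : 'I_g) :
  ~ wmaximal is_ t -> j \in is_ t -> (j < fOstar is_ t)%N ->
  (index j (is_ t) < (fOstar is_ t).-1)%N.
Proof.
move=> nonmax j_is j_lt; have [y y_is le_y] := nonmaximal_witness nonmax.
have y_in : (index y (is_ t) < fOstar is_ t)%N by rewrite index_mem.
have : (index j (is_ t) < index y (is_ t))%N.
  rewrite -!(index_map val_inj); apply: sorted_index_lt;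
    rewrite ?sorted_map ?(mem_map val_inj) //.
  exact: leq_trans j_lt le_y.
lia.
Qed.

Lemma wperm_is (t : 'I_l) (j : 'I_g) :
  j \in is_ t -> wperm js is_ t j = (fO js t + index j (is_ t))%N.
Proof. by move=> j_is; rewrite /wperm index_cat (negbTE (is_notin_js j_is)). Qed.

Lemma wperm_js (t : 'I_l) (j : 'I_g) : j \in js t -> wperm js is_ t j = index j (js t).
Proof. by move=> j_js; rewrite /wperm index_cat j_js. Qed.

Lemma Fimg_is (t : 'I_l) (j : 'I_g) :
  j \in is_ t -> Fimg (K:=K) js is_ t j = ebasis_nat (index j (is_ t)).
Proof. by move=> j_is; rewrite /Fimg wperm_is // leq_addr addKn. Qed.

Lemma Fimg_js (t : 'I_l) (j : 'I_g) : j \in js t -> Fimg (K:=K) js is_ t j = 0.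
Proof. by move=> j_js; rewrite /Fimg wperm_js // /fO leqNgt index_mem j_js. Qed.

Lemma Vimg_is (t : 'I_l) (j : 'I_g) : j \in is_ t -> Vimg (K:=K) js is_ t j = 0.
Proof. by move=> j_is; rewrite /Vimg wperm_is // ltnNge leq_addr. Qed.

Lemma Vimg_js (t : 'I_l) (j : 'I_g) :
  j \in js t -> Vimg (K:=K) js is_ t j = ebasis_nat (fOstar is_ t + index j (js t))%N.
Proof. by move=> j_js; rewrite /Vimg wperm_js // /fO index_mem j_js. Qed.

Lemma Fmap_supported_fOstar (t : 'I_l) (v : 'rV[K]_g) :
  supported (gtn (fOstar is_ t)) (Fmap p js is_ t v).
Proof.
apply: (@supported_semilin _ _ _ _ predT) => // j _.
have /orP[j_js | j_is] := js_or_is t j; first by rewrite Fimg_js //; apply: supported0.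
by rewrite Fimg_is //; apply: supported_ebasis; rewrite /= /fOstar index_mem.
Qed.

Lemma Fmap_supported (n : nat) (t : 'I_l) (v : 'rV[K]_g) :
  supported (gtn n) v -> supported (gtn n) (Fmap p js is_ t v).
Proof.
move=> v_supp; apply: (@supported_semilin _ _ _ _ (gtn n)) => // j j_lt.
have /orP[j_js | j_is] := js_or_is t j; first by rewrite Fimg_js //; apply: supported0.
by rewrite Fimg_is //; apply: supported_ebasis; apply: leq_ltn_trans (index_is_le j_is) _.
Qed.

Lemma FVmap_supported (n : nat) (t : 'I_l) (v : 'rV[K]_g) :
  wmaximal is_ t -> supported (gtn n) v ->
  supported (gtn n) (Fmap p js is_ t v + Vmap p js is_ t v).
Proof.
move=> max_t v_supp; apply: supportedD; first exact: Fmap_supported.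
apply: (@supported_semilin _ _ _ _ (gtn n)) => // j j_lt.
have /orP[j_js | j_is] := js_or_is t j; last by rewrite Vimg_is //; apply: supported0.
rewrite Vimg_js //; apply: supported_ebasis.
exact: leq_ltn_trans (index_js_bound max_t j_js) _.
Qed.

Lemma Fmap_supported_nonmax (t : 'I_l) (v : 'rV[K]_g) :
  ~ wmaximal is_ t -> supported (gtn (fOstar is_ t)) v ->
  supported (gtn (fOstar is_ t).-1) (Fmap p js is_ t v).
Proof.
move=> nonmax v_supp; apply: (@supported_semilin _ _ _ _ (gtn (fOstar is_ t))) => // j j_lt.
have /orP[j_js | j_is] := js_or_is t j; first by rewrite Fimg_js //; apply: supported0.
by rewrite Fimg_is //; apply: supported_ebasis; apply: index_is_nonmax.
Qed.

Section Chain.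
Variable tau : 'I_l.
(* the induction hypothesis: every tau' with f(tau'^* ) < f(tau^* ) is maximal *)
Hypothesis lower_maximal :
  forall t, (fOstar is_ t < fOstar is_ tau)%N -> wmaximal is_ t.

Local Notation H := (Hcomp (K:=K) p js is_ tau).

(* Each step H_{tau,m} preserves every Span(e_k : k < n): it is either F, or
   F + V' at some p^m tau with f(p^m tau^* ) < f(tau^* ), hence maximal. *)
Lemma Hcomp_step_supported (n m : nat) (x : 'rV[K]_g) :
  supported (gtn n) (H m x) -> supported (gtn n) (H m.+1 x).
Proof.
move=> Hm_supp /=; rewrite /Hmap; case: ifP => [_ | not_ge]; first exact: Fmap_supported.
by apply: FVmap_supported => //; apply: lower_maximal; rewrite ltnNge not_ge.
Qed.

Lemma Hcomp_supported_mono (n m m' : nat) (x : 'rV[K]_g) : (m <= m')%N ->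
  supported (gtn n) (H m x) -> supported (gtn n) (H m' x).
Proof.
move=> /subnK <-; elim: (m' - m)%N => [|d IHd] Hm_supp; first by rewrite add0n.
by rewrite addSn; apply/Hcomp_step_supported/IHd.
Qed.

(* The first step H_{tau,0} = F lands in Span(e_k : k < f(tau^* )), and the
   later steps keep the image there. *)
Lemma Hcomp_supported_fOstar (m : nat) (x : 'rV[K]_g) :
  (0 < m)%N -> supported (gtn (fOstar is_ tau)) (H m x).
Proof.
move=> m_gt0; apply: (Hcomp_supported_mono m_gt0).
by rewrite /= /Hmap /ppow /= leqnn; apply: Fmap_supported_fOstar.
Qed.

(* A non-maximal p^i tau (0 < i < l) with the same f makes H_{tau,i} = F, which
   pushes the image into Span(e_k : k < f(tau^* ) - 1). *)
Lemma Hcomp_supported_nonmax (i : nat) (x : 'rV[K]_g) : (0 < i < l)%N ->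
  ~ wmaximal is_ (ppow i tau) -> fOstar is_ (ppow i tau) = fOstar is_ tau ->
  supported (gtn (fOstar is_ tau).-1) (H l x).
Proof.
case/andP=> i_gt0 i_lt_l nonmax same_f; apply: (Hcomp_supported_mono i_lt_l).
rewrite /= /Hmap /= same_f leqnn -same_f.
by apply: Fmap_supported_nonmax => //; rewrite same_f; apply: Hcomp_supported_fOstar.
Qed.

Definition Himage (v : 'rV[K]_g) : Prop := exists x, v = piproj is_ tau (H l x).

Lemma Himage_small (t : 'I_l) : ~ wmaximal is_ t -> fOstar is_ t = fOstar is_ tau ->
  exists2 s : seq nat, (size s < fOstar is_ tau)%N &
    forall v, Himage v -> supported (fun n => n \in s) v.
Proof.
move=> nonmax same_f; have l_gt0 : (0 < l)%N by have := ltn_ord tau; lia.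
have [[|i] i_lt_l t_def] := orbit_ppow tau t.
- (* t = tau: pi_tau keeps only the coordinates i_{tau,k} < f(tau^* ) *)
  rewrite -t_def /= in nonmax; have [y y_is le_y] := nonmaximal_witness nonmax.
  exists (filter (gtn (fOstar is_ tau)) (map val (is_ tau))).
    have : has (predC (gtn (fOstar is_ tau))) (map val (is_ tau)).
      by apply/hasP; exists (val y); rewrite ?map_f //= -leqNgt.
    rewrite has_count size_filter => cP_gt0.
    rewrite [X in (_ < X)%N](_ : _ = size (map val (is_ tau))); last by rewrite size_map.
    by rewrite -(count_predC (gtn (fOstar is_ tau))) -[X in (X < _)%N]addn0 ltn_add2l.
  move=> _ [x ->] j; rewrite /= mem_filter (mem_map val_inj) mxE.
  case: ifP => // j_is; rewrite andbT => j_ge.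
  exact (Hcomp_supported_fOstar x l_gt0 j_ge).
-
  rewrite -t_def in nonmax same_f.
  have [j j_is _] := nonmaximal_witness nonmax.
  have f_gt0 : (0 < fOstar is_ tau)%N by rewrite -same_f /fOstar; case: (is_ _) j_is.
  exists (iota 0 (fOstar is_ tau).-1); first by rewrite size_iota; lia.
  move=> _ [x ->]; apply: supported_piproj.
  apply: (supported_mono (@Hcomp_supported_nonmax i.+1 x i_lt_l nonmax same_f)) => n.
  by rewrite /= mem_iota.
Qed.

Lemma maximal_of_Himage_dim (t : 'I_l) :
  has_dim Himage (fOstar is_ tau) -> fOstar is_ t = fOstar is_ tau -> wmaximal is_ t.
Proof.
move=> dim_tau same_f; apply/eqP; apply: contraT => /eqP nonmax.
have [s s_small s_supp] := Himage_small nonmax same_f.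
by have := has_dim_supported dim_tau s_supp; rewrite leqNgt s_small.
Qed.

End Chain.
End SetupA.

Unset Implicit Arguments.

Theorem theorem4p6
  (K : closedFieldType) (p : nat) (hp : prime p) (hchar : p \in [pchar K])
  (halg : forall x : K, exists n : nat, (0 < n)%N /\ x ^+ (p ^ n) = x)
  (l g : nat) (hl : (0 < l)%N) (hg : (1 <= g)%N)
  (js is_ : 'I_l -> seq 'I_g)
  (hjs : forall t, sorted (fun a b : 'I_g => (a < b)%N) (js t))
  (his : forall t, sorted (fun a b : 'I_g => (a < b)%N) (is_ t))
  (hpart : forall t, perm_eq (js t ++ is_ t) (enum 'I_g))
  (rep : nat -> 'I_l)
  (hrep : forall t, fOstar is_ (rep (fOstar is_ t)) = fOstar is_ t)
  (c : nat) (hc : exists t, fOstar is_ t = c)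
  (hdim : forall t, (fOstar is_ t <= c)%N ->
     has_dim (fun v : 'rV[K]_g => exists x : 'rV[K]_g,
                v = piproj is_ (rep (fOstar is_ t))
                      (Hcomp p js is_ (rep (fOstar is_ t)) l x))
             (fOstar is_ t)) :
  forall t : 'I_l, (fOstar is_ t <= c)%N -> wmaximal is_ t.
Proof.
suff maximal_at a : forall t, fOstar is_ t = a -> (a <= c)%N -> wmaximal is_ t.
  by move=> t; apply: maximal_at.
elim/ltn_ind: a => a IHa t t_a a_le_c.
have tau_a : fOstar is_ (rep a) = a by rewrite -t_a hrep.
apply: (maximal_of_Himage_dim (prime_gt0 hp) hjs his hpart (tau := rep a)).
- move=> t'; rewrite tau_a => lt_t'a.
  by apply: (IHa _ lt_t'a) => //; apply: ltnW (leq_trans lt_t'a a_le_c).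
- by have := hdim t; rewrite t_a tau_a => /(_ a_le_c) dim_a; exact: dim_a.
- by rewrite t_a tau_a.
Qed.
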